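(* Let $p$ be a prime and let $a,b,c$ be positive integers such that $c$ is a primitive divisor of $p^a-1$ and $bc$ is a primitive divisor of $p^{ab}-1$. Then the Waring numbers below exist and $$g\Big(\tfrac{p^{ab}-1}{bc},\,p^{ab}\Big)=b\,g\Big(\tfrac{p^a-1}{c},\,p^a\Big).$$
   Context: For a prime power $q$ and a positive integer $k$, the Waring number $g(k,q)$ is the smallest $s$ (if it exists) such that every element of $\mathbb{F}_q$ can be written as $x_1^k+\cdots+x_s^k$ with $x_i\in\mathbb{F}_q$. An integer $e$ is a primitive divisor of $p^a-1$ if $e\mid p^a-1$ and $e\nmid p^t-1$ for every $1\le t<a$. *)

From HB Require Import structures.
From mathcomp Require Import all_boot all_order all_algebra all_field.
Set Implicit Arguments. Unset Strict Implicit. Unset Printing Implicit Defensive.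
Import GRing.Theory.

Definition primitive_divisor (e p a : nat) : Prop :=
  (e %| p ^ a - 1)%N /\ forall t : nat, (0 < t)%N -> (t < a)%N -> ~~ (e %| p ^ t - 1)%N.

Definition waring_sum (F : finFieldType) (k s : nat) : Prop :=
  forall x : F, exists xs : s.-tuple F, x = (\sum_(i < s) (tnth xs i) ^+ k)%R.

Definition is_waring_number (F : finFieldType) (k g : nat) : Prop :=
  waring_sum F k g /\ forall s : nat, waring_sum F k s -> (g <= s)%N.

From HB Require Import structures.
From mathcomp Require Import all_boot all_order all_algebra all_solvable all_field.
From Stdlib Require Import Classical.
Set Implicit Arguments. Unset Strict Implicit. Unset Printing Implicit Defensive.
Import GRing.Theory.
Local Open Scope ring_scope.

(* Put q = p^a, k1 = (q - 1)/c and k2 = (q^b - 1)/(bc).  The k1-th powers of F_q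
   are 0 and the c-th roots of unity; the k2-th powers of F_(q^b) are 0 and the
   bc-th roots of unity.  Embed F_q into F_(q^b) and pick a primitive bc-th root of
   unity z: then z^b is a primitive c-th root of unity of F_q, so every bc-th root
   of unity is z^r u with r < b and u^c = 1.  As bc is a primitive divisor, the
   powers of z span F_(q^b) additively, hence Y |-> sum_(r<b) z^r Y_r is an
   additive bijection F_q^b -> F_(q^b) (by counting).  Through it, a sum of s
   bc-th roots of unity is the same as b coordinatewise sums of c-th roots of
   unity of total length s, and a vector whose coordinates all need g(k1, q)
   summands shows that g(k2, q^b) = b g(k1, q). *)

Section FinFieldRoots.
Variable F : finFieldType.
Implicit Types (x y : F) (d : nat).

Lemma finField_card_pred_gt0 : (0 < #|F|.-1)%N.
Proof. by rewrite -ltnS prednK ?finNzRing_gt1 // (cardD1 0). Qed.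

Lemma expf_card_pred x : x != 0 -> x ^+ #|F|.-1 = 1.
Proof.
move=> nz_x; apply: (mulIf nz_x); rewrite mul1r -exprSr prednK ?expf_card //.
by rewrite (cardD1 x).
Qed.

Lemma expf_card_exp x k : x ^+ (#|F| ^ k) = x.
Proof. by elim: k => [|k IHk]; rewrite ?expr1 // expnS mulnC exprM IHk expf_card. Qed.

Lemma finField_prim_root : exists w : F, (#|F|.-1).-primitive_root w.
Proof.
have unity_nz : all (#|F|.-1).-unity_root (enum (predC1 (0 : F))).
  by apply/allP => x; rewrite mem_enum unity_rootE => /expf_card_pred->.
have := has_prim_root finField_card_pred_gt0 unity_nz (enum_uniq _).
by rewrite -cardE cardC1 leqnn => /(_ isT)/hasP[w _ pw]; exists w.
Qed.

Definition unity_root0 d := [pred x : F | (x == 0) || (x ^+ d == 1)].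

Lemma unity_root0_zero d : unity_root0 d 0.
Proof. by rewrite inE eqxx. Qed.

Lemma prim_root_unity_root0 d z i : d.-primitive_root z -> unity_root0 d (z ^+ i).
Proof.
by move=> pz; rewrite inE -exprM mulnC exprM (prim_expr_order pz) expr1n eqxx orbT.
Qed.

Lemma kth_powerP d x : (0 < d)%N -> (d %| #|F|.-1)%N ->
  (exists y, x = y ^+ (#|F|.-1 %/ d)) <-> unity_root0 d x.
Proof.
move=> d_gt0 dvd_d; have k_gt0 : (0 < #|F|.-1 %/ d)%N.
  by rewrite divn_gt0 // dvdn_leq ?finField_card_pred_gt0.
split=> [[y ->]|].
  have [->|nz_y] := eqVneq y 0; first by rewrite expr0n eqn0Ngt k_gt0 inE eqxx.
  by rewrite inE -exprM divnK // expf_card_pred // eqxx orbT.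
rewrite inE; have [-> _|nz_x /= /eqP xd1] := eqVneq x 0.
  by exists 0; rewrite expr0n eqn0Ngt k_gt0.
have [w pw] := finField_prim_root.
have [i x_wi] := prim_rootP pw (expf_card_pred nz_x).
have : (#|F|.-1 %| i * d)%N by rewrite (prim_order_dvd pw) exprM -x_wi xd1.
rewrite -{1}(divnK dvd_d) dvdn_pmul2r // => /dvdnP[j i_jk].
by exists (w ^+ j); rewrite x_wi i_jk exprM.
Qed.

End FinFieldRoots.

Section SumsOf.
Variables (V : nmodType) (P : pred V).

Definition sum_of (s : nat) (x : V) :=
  exists l : seq V, [/\ size l = s, all P l & x = \sum_(y <- l) y].

Lemma sum_of0 : sum_of 0 0.
Proof. by exists [::]; rewrite big_nil. Qed.

Lemma sum_of1 x : P x -> sum_of 1 x.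
Proof. by move=> Px; exists [:: x]; rewrite big_seq1 /= Px. Qed.

Lemma sum_ofD s t x y : sum_of s x -> sum_of t y -> sum_of (s + t) (x + y).
Proof.
move=> [l1 [<- Pl1 ->]] [l2 [<- Pl2 ->]].
by exists (l1 ++ l2); rewrite size_cat all_cat Pl1 Pl2 big_cat.
Qed.

Lemma sum_of_sum (I : Type) (r : seq I) (n : I -> nat) (f : I -> V) :
  (forall i, sum_of (n i) (f i)) -> sum_of (\sum_(i <- r) n i)%N (\sum_(i <- r) f i).
Proof.
move=> nf; apply: (big_ind2 sum_of) => //; first exact: sum_of0.
by move=> s1 x1 s2 x2; apply: sum_ofD.
Qed.

Lemma sum_of_muln s m x : sum_of s x -> sum_of (s * m) (x *+ m).
Proof.
move=> sx; elim: m => [|m IHm]; first by rewrite muln0 mulr0n; exact: sum_of0.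
by rewrite mulnS mulrS; apply: sum_ofD.
Qed.

Lemma sum_of_mono s t x : P 0 -> (s <= t)%N -> sum_of s x -> sum_of t x.
Proof.
move=> P0 le_st sx; rewrite -(subnKC le_st) -[x]addr0; apply: sum_ofD sx _.
elim: (t - s)%N => [|k IHk]; first exact: sum_of0.
by rewrite -add1n -[0]addr0; exact: sum_ofD (sum_of1 P0) IHk.
Qed.

Definition min_cover g :=
  (forall x, sum_of g x) /\ (forall s, (forall x, sum_of s x) -> (g <= s)%N).

Lemma min_cover_hard g : P 0 -> min_cover g -> exists y, forall t, sum_of t y -> (g <= t)%N.
Proof.
move=> P0 [_ g_min]; apply: NNPP => no_hard.
have short y : exists2 t, sum_of t y & (t < g)%N.
  apply: NNPP => long_y; apply: no_hard; exists y => t yt.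
  by rewrite leqNgt; apply/negP => lt_tg; apply: long_y; exists t.
have g_gt0 : (0 < g)%N by have [t _ /(leq_ltn_trans (leq0n t))] := short 0.
have : (g <= g.-1)%N.
  apply: g_min => y; have [t yt lt_tg] := short y.
  by apply: sum_of_mono yt; rewrite // -ltnS prednK.
by rewrite leqNgt ltn_predL g_gt0.
Qed.

End SumsOf.

Lemma ex_minimal (Q : nat -> Prop) :
  (exists n, Q n) -> exists2 m, Q m & forall n, Q n -> (m <= n)%N.
Proof.
case=> n; elim/ltn_ind: n => n IHn Qn.
have [[m Qm lt_mn]|no_smaller] := classic (exists2 m, Q m & (m < n)%N).
  exact: IHn Qm.
exists n => // m Qm; rewrite leqNgt; apply/negP => lt_mn.
by apply: no_smaller; exists m.
Qed.

Lemma ex_min_cover (V : finNmodType) (P : pred V) : P 0 ->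
  (forall x, exists s, sum_of P s x) -> exists g, min_cover P g.
Proof.
move=> P0 reprP.
have [s cover_s] : exists s, forall x, sum_of P s x.
  suff [s sP] : exists s, forall x, x \in enum V -> sum_of P s x.
    by exists s => x; apply: sP; rewrite mem_enum.
  elim: (enum V) => [|y l [s IHl]]; first by exists 0%N.
  have [t yt] := reprP y; exists (maxn s t) => x; rewrite inE => /predU1P[->|xl].
    by apply: sum_of_mono yt; rewrite // leq_maxr.
  by apply: sum_of_mono (IHl _ xl); rewrite // leq_maxl.
have [g cover_g g_min] := @ex_minimal (fun s => forall x, sum_of P s x) (ex_intro _ s cover_s).
by exists g.
Qed.

Lemma waring_sumE (F : finFieldType) (d s : nat) : (0 < d)%N -> (d %| #|F|.-1)%N ->
  waring_sum F (#|F|.-1 %/ d) s <-> forall x, sum_of (unity_root0 F d) s x.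
Proof.
move=> d_gt0 dvd_d; set k := (#|F|.-1 %/ d)%N; split=> [W x|S x].
  have [xs ->] := W x; exists (map (fun y => y ^+ k) xs); split.
  - by rewrite size_map size_tuple.
  - by apply/allP => _ /mapP[y _ ->]; apply/kth_powerP => //; exists y.
  - by rewrite big_map big_tuple.
have [l [<- Pl ->]] := S x.
have [ys <-] : exists ys, map (fun y => y ^+ k) ys = l.
  elim: l Pl => [|t l IHl] /=; first by exists [::].
  by case/andP => /kth_powerP-/(_ d_gt0 dvd_d)[y ->] /IHl[ys <-]; exists (y :: ys).
rewrite size_map; exists (in_tuple ys); rewrite big_map.
exact: (big_tuple _ _ (in_tuple ys) xpredT (fun y => y ^+ k)).
Qed.

Lemma is_waring_numberE (F : finFieldType) (d g : nat) : (0 < d)%N -> (d %| #|F|.-1)%N ->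
  is_waring_number F (#|F|.-1 %/ d) g <-> min_cover (unity_root0 F d) g.
Proof.
move=> d_gt0 dvd_d; have E s := waring_sumE s d_gt0 dvd_d.
by split=> -[cover_g g_min]; split=> [|s /E]; try exact/E; apply: g_min; apply/E.
Qed.

Lemma primitive_divisor_expansion (F : finFieldType) (p n d : nat) (z : F) :
  prime p -> #|F| = (p ^ n)%N -> primitive_divisor d p n -> d.-primitive_root z ->
  forall x : F, exists k (m : nat -> nat), x = \sum_(i < k) z ^+ i *+ m i.
Proof.
move=> p_pr oF [_ d_prim] pz.
have nz_z : z != 0 by rewrite (prim_root_eq0 pz) -lt0n (prim_order_gt0 pz).
pose L := pPrimeCharType (card_finPcharP oF p_pr).
pose K : {subfield L} := <<1; (z : L)>>%AS.
have dimL : \dim {: L} = n by rewrite pprimeChar_dimf oF pfactorK.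
(* F_p(z) has p^k elements and contains z, so d | p^k - 1, and primitivity forces k = n. *)
have dvd_dK : (d %| p ^ \dim K - 1)%N.
  have := Fermat's_little_theorem K (z : L).
  rewrite memv_adjoin card_Fp // => /esym/eqP zK.
  rewrite (prim_order_dvd pz); apply/eqP/(mulIf nz_z).
  by rewrite mul1r -exprSr subn1 prednK ?expn_gt0 ?prime_gt0.
have KL : K = fullv :> {vspace L}.
  have := dimvS (subvf K); rewrite dimL => le_Kn.
  apply/eqP; rewrite -(dimv_leqif_eq (subvf K)) dimL eqn_leq le_Kn /=.
  by rewrite leqNgt; apply/negP => /(d_prim _ (adim_gt0 _)); rewrite dvd_dK.
move=> x; have xK : (x : L) \in <<1; (z : L)>>%VS by rewrite KL memvf.
have /polyOver1P[q Dq] := Fadjoin_polyOver 1 (z : L) (x : L).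
exists (size (map_poly (in_alg L) q)), (fun i => nat_of_ord q`_i).
rewrite -(Fadjoin_poly_eq xK) Dq horner_coef; apply: eq_bigr => i _.
by rewrite coef_map /= -mulr_natl; congr (_ * _); exact: mulr1.
Qed.

Lemma primitive_divisor_sum_of (F : finFieldType) (p n d : nat) :
  prime p -> #|F| = (p ^ n)%N -> primitive_divisor d p n ->
  forall x : F, exists s, sum_of (unity_root0 F d) s x.
Proof.
move=> p_pr oF d_prim x.
have dvd_dF : (d %| #|F|.-1)%N by rewrite oF -subn1; case: d_prim.
have [w pw] := finField_prim_root F.
have pz := dvdn_prim_root pw dvd_dF; set z := w ^+ _ in pz.
have [k [m ->]] := primitive_divisor_expansion p_pr oF d_prim pz x.
exists (\sum_(i < k) m i)%N; apply: sum_of_sum => i.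
rewrite -{1}[m i]mul1n; apply: sum_of_muln; apply: sum_of1.
exact: prim_root_unity_root0.
Qed.

Lemma finField_root_dvdp (F : finFieldType) (r : {poly F}) :
  (1 < size r)%N -> r %| 'X^#|F| - 'X -> exists x, root r x.
Proof.
move=> r_gt1; rewrite finField_genPoly => /dvdp_prod_XsubC[m].
case: (mask m _) => [|x s] r_eq.
  by move: r_gt1; rewrite (eqp_size r_eq) big_nil size_poly1.
by exists x; rewrite (eqp_root r_eq) root_prod_XsubC mem_head.
Qed.

Lemma rmorph_factor (R S T : nzRingType) (e : {rmorphism R -> S}) (f : {rmorphism R -> T}) :
  (forall y, exists x, e x = y) -> (forall x, e x = 0 -> f x = 0) ->
  exists g : {rmorphism S -> T}, forall x, g (e x) = f x.
Proof.
move=> e_surj ker_ef.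
have e_surjb y : exists x, e x == y by have [x <-] := e_surj y; exists x.
pose s y := xchoose (e_surjb y); have sK y : e (s y) = y := eqP (xchooseP (e_surjb y)).
pose g y := f (s y).
have gE x y : e x = y -> g y = f x.
  move=> exy; apply/eqP; rewrite -subr_eq0 -rmorphB ker_ef //.
  by rewrite rmorphB exy sK subrr.
have g_nmod : nmod_morphism g.
  split=> [|y1 y2]; first by rewrite (gE 0) ?rmorph0.
  by rewrite (gE (s y1 + s y2)) ?rmorphD // !sK.
have g_monoid : monoid_morphism g.
  split=> [|y1 y2]; first by rewrite (gE 1) ?rmorph1.
  by rewrite (gE (s y1 * s y2)) ?rmorphM // !sK.
pose gM : {rmorphism S -> T} :=
  HB.pack g (GRing.isNmodMorphism.Build _ _ g g_nmod) (GRing.isMonoidMorphism.Build _ _ g g_monoid).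
by exists gM => x; exact: gE.
Qed.

Lemma finField_embedding (p a b : nat) (F1 F2 : finFieldType) :
  prime p -> #|F1| = (p ^ a)%N -> #|F2| = (p ^ (a * b))%N -> inhabited {rmorphism F1 -> F2}.
Proof.
move=> p_pr oF1 oF2.
pose L1 := pPrimeCharType (card_finPcharP oF1 p_pr).
pose L2 := pPrimeCharType (card_finPcharP oF2 p_pr).
have [w pw] := finField_prim_root F1.
have /polyOver1P[r Dr] := minPolyOver 1 (w : L1).
have r_dvd f : horner_alg (w : L1) f = 0 -> r %| f.
  move=> wf0; rewrite -(dvdp_map (in_alg L1)) -Dr minPoly_dvdp //; last exact/rootP.
  by apply/polyOver1P; exists f.
(* The embedding sends f(w) to f(w'), for a root w' in F2 of the minimal polynomial of w. *)
have [w' rw'] : exists w' : L2, root (map_poly (in_alg L2) r) w'.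
  apply: finField_root_dvdp.
    rewrite size_map_poly -(size_map_poly (in_alg L1)) -Dr.
    exact: root_size_gt1 (monic_neq0 (monic_minPoly _ _)) (root_minPoly _ _).
  have -> : 'X^#|L2| - 'X = map_poly (in_alg L2) ('X^(#|F1| ^ b) - 'X).
    by rewrite rmorphB /= map_polyXn map_polyX oF1 -expnM -oF2.
  rewrite dvdp_map; apply: r_dvd.
  by rewrite rmorphB rmorphXn /= horner_algX expf_card_exp subrr.
have e_surj (x : L1) : exists f, horner_alg (w : L1) f = x.
  have [->|nz_x] := eqVneq x 0; first by exists 0; rewrite rmorph0.
  have [i ->] := prim_rootP pw (expf_card_pred nz_x).
  by exists 'X^i; rewrite rmorphXn /= horner_algX.
have ker_ww' f : horner_alg (w : L1) f = 0 -> horner_alg w' f = 0.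
  by move=> /r_dvd/dvdpP[h ->]; rewrite rmorphM /= [horner_alg w' r](rootP rw') mulr0.
have [g _] := rmorph_factor e_surj ker_ww'.
by constructor; exact: g.
Qed.

Section Decomposition.
Variables (F1 F2 : finFieldType) (phi : {rmorphism F1 -> F2}) (b c : nat) (w : F1) (z : F2).
Hypotheses (b_gt0 : (0 < b)%N) (pw : c.-primitive_root w) (pz : (b * c).-primitive_root z).
Hypothesis card_F2 : #|F2| = (#|F1| ^ b)%N.
Hypothesis F2_span : forall x : F2, exists s, sum_of (unity_root0 F2 (b * c)) s x.

Local Notation P1 := (unity_root0 F1 c).
Local Notation P2 := (unity_root0 F2 (b * c)).

Lemma unity_root0_twist r y : P1 y -> P2 (z ^+ r * phi y).
Proof.
rewrite !inE => /orP[/eqP->|/eqP yc1]; first by rewrite rmorph0 mulr0 eqxx.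
rewrite exprMn -exprM mulnC exprM (prim_expr_order pz) expr1n mul1r.
by rewrite mulnC exprM -rmorphXn yc1 rmorph1 expr1n eqxx orbT.
Qed.

Lemma unity_root0_untwist t : P2 t -> exists (r : 'I_b) (y : F1), P1 y /\ t = z ^+ r * phi y.
Proof.
rewrite inE => /orP[/eqP->|/eqP tbc1].
  by exists (Ordinal b_gt0), 0; rewrite rmorph0 mulr0 inE eqxx.
have [i ->] := prim_rootP pz tbc1.
have [j zb] : exists j, z ^+ b = phi w ^+ j.
  have pphiw : c.-primitive_root (phi w) by rewrite fmorph_primitive_root.
  have zbc1 : (z ^+ b) ^+ c = 1 by rewrite -exprM prim_expr_order.
  by have [j ->] := prim_rootP pphiw zbc1; exists j.
exists (Ordinal (ltn_pmod i b_gt0)), (w ^+ (j * (i %/ b))); split.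
  exact: prim_root_unity_root0.
rewrite rmorphXn exprM -zb -exprM -exprD; congr (_ ^+ _).
by rewrite addnC (mulnC b (i %/ b)%N) -divn_eq.
Qed.

Definition fdelta (r : 'I_b) (y : F1) : {ffun 'I_b -> F1} := [ffun j => if j == r then y else 0].

Definition zcomb (Y : {ffun 'I_b -> F1}) : F2 := \sum_(r < b) z ^+ r * phi (Y r).

Fact zcomb_is_zmod_morphism : zmod_morphism zcomb.
Proof.
by move=> Y1 Y2; rewrite /zcomb -sumrB; apply: eq_bigr => r _; rewrite !ffunE rmorphB mulrBr.
Qed.
HB.instance Definition _ := GRing.isZmodMorphism.Build _ _ zcomb zcomb_is_zmod_morphism.

Lemma zcomb_delta r y : zcomb (fdelta r y) = z ^+ r * phi y.
Proof.
rewrite /zcomb (bigD1 r) //= big1 => [|j /negbTE nj_r]; first by rewrite ffunE eqxx addr0.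
by rewrite ffunE nj_r rmorph0 mulr0.
Qed.

Lemma zcomb_surj x : exists Y, zcomb Y = x.
Proof.
have [_ [l [_ Pl ->]]] := F2_span x.
elim: l Pl => [|t l IHl] /=; first by exists 0; rewrite raddf0 big_nil.
rewrite big_cons => /andP[/unity_root0_untwist[r [y [_ ->]]] /IHl[Y <-]].
by exists (fdelta r y + Y); rewrite raddfD /= zcomb_delta.
Qed.

Lemma zcomb_inj : injective zcomb.
Proof.
have /image_injP zcomb_inj : #|image zcomb {ffun 'I_b -> F1}| == #|{ffun 'I_b -> F1}|.
  rewrite eqn_leq leq_image_card card_ffun card_ord -card_F2 /=.
  by apply/subset_leq_card/subsetP => x _; have [Y <-] := zcomb_surj x; exact: image_f.
by move=> Y1 Y2; apply: zcomb_inj.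
Qed.

Lemma sum_of_zcombP s Y : sum_of P2 s (zcomb Y) <->
  exists cnt : 'I_b -> nat, (\sum_r cnt r)%N = s /\ forall r, sum_of P1 (cnt r) (Y r).
Proof.
split=> [[l [<- Pl YE]] | [cnt [<- cntY]]]; last first.
  apply: sum_of_sum => r; have [l [<- Pl ->]] := cntY r.
  exists (map (fun y => z ^+ r * phi y) l); split.
  - by rewrite size_map.
  - by apply/allP => _ /mapP[y yl ->]; apply/unity_root0_twist/(allP Pl).
  - by rewrite big_map rmorph_sum mulr_sumr.
elim: l Pl Y YE => [_ Y|t l IHl /= /andP[Pt Pl] Y].
  rewrite big_nil -(raddf0 zcomb) => /zcomb_inj ->.
  by exists (fun _ => 0%N); split=> [|r]; rewrite ?big1 // ffunE; exact: sum_of0.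
have [r [y [Py ->]]] := unity_root0_untwist Pt.
rewrite big_cons -zcomb_delta => YE.
have YE' : zcomb (Y - fdelta r y) = \sum_(t <- l) t by rewrite raddfB /= YE addrAC subrr add0r.
have [cnt [<- cntY]] := IHl Pl _ YE'.
exists (fun j => cnt j + (j == r))%N; split.
  have sum_delta : (\sum_(j < b) (j == r) = 1)%N.
    by rewrite (bigD1 r) //= eqxx big1 // => j /negbTE->.
  by rewrite big_split /= sum_delta addn1.
move=> j; have := cntY j; rewrite -[Y j](subrK (fdelta r y j)) !ffunE => Yj.
by apply: sum_ofD Yj _; case: eqP => _; [exact: sum_of1 | exact: sum_of0].
Qed.

Lemma min_cover_zcomb g : min_cover P1 g -> min_cover P2 (b * g).
Proof.
move=> min_g; split=> [x | s cover_s].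
  have [Y <-] := zcomb_surj x; apply/sum_of_zcombP; exists (fun _ => g).
  by rewrite sum_nat_const card_ord; split=> // r; apply: min_g.1.
have [y y_hard] := min_cover_hard (unity_root0_zero F1 c) min_g.
have [cnt [<- cntY]] := (sum_of_zcombP s [ffun => y]).1 (cover_s _).
rewrite -[X in (X * g)%N]card_ord -sum_nat_const; apply: leq_sum => r _.
by apply: y_hard; have := cntY r; rewrite ffunE.
Qed.

End Decomposition.

Theorem mainTheorem3 (p a b c : nat) (F1 F2 : finFieldType) :
  prime p -> (0 < a)%N -> (0 < b)%N -> (0 < c)%N ->
  primitive_divisor c p a ->
  primitive_divisor (b * c) p (a * b) ->
  #|F1| = (p ^ a)%N -> #|F2| = (p ^ (a * b))%N ->
  exists g1 g2 : nat,
    [/\ is_waring_number F1 ((p ^ a - 1) %/ c) g1,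
        is_waring_number F2 ((p ^ (a * b) - 1) %/ (b * c)) g2
      & g2 = (b * g1)%N].
Proof.
move=> p_pr _ b_gt0 c_gt0 c_prim bc_prim oF1 oF2.
have q1E : (p ^ a - 1)%N = #|F1|.-1 by rewrite oF1 subn1.
have q2E : (p ^ (a * b) - 1)%N = #|F2|.-1 by rewrite oF2 subn1.
have dvd_c : (c %| #|F1|.-1)%N by rewrite -q1E; case: c_prim.
have dvd_bc : (b * c %| #|F2|.-1)%N by rewrite -q2E; case: bc_prim.
have [phi] := finField_embedding p_pr oF1 oF2.
have [w1 pw1] := finField_prim_root F1; have [w2 pw2] := finField_prim_root F2.
have [g1 g1_min] := ex_min_cover (unity_root0_zero F1 c) (primitive_divisor_sum_of p_pr oF1 c_prim).
have bc_gt0 : (0 < b * c)%N by rewrite muln_gt0 b_gt0.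
exists g1, (b * g1)%N; rewrite q1E q2E; split=> //; first exact/(is_waring_numberE _ c_gt0 dvd_c).
apply/(is_waring_numberE _ bc_gt0 dvd_bc).
apply: (min_cover_zcomb phi b_gt0 (dvdn_prim_root pw1 dvd_c) (dvdn_prim_root pw2 dvd_bc)) => //.
  by rewrite oF1 oF2 expnM.
exact: primitive_divisor_sum_of p_pr oF2 bc_prim.
Qed.
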